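(* Let $n_\theta\in\mathbb{N}$ and let $\kappa:\mathbb{R}^{n_\theta}\times\mathbb{R}^{n_\theta}\to\mathbb{R}$ be a kernel (as in the context) with reproducing kernel Hilbert space $\mathcal{H}$. Let a dataset $\mathcal{D}_k=\{(\widetilde\theta_i,\widetilde y_i)\mid i=1,\dots,N_k\}\subset\mathbb{R}^{n_\theta}\times\mathbb{R}$, constants $\bar\delta\ge 0$ and $\Gamma>0$, and a function $f\in\mathcal{H}$ be given such that $\lVert f\rVert\le\Gamma$ and $|f(\widetilde\theta_i)-\widetilde y_i|\le\bar\delta$ for all $i=1,\dots,N_k$. Let $m_k$ be defined by $$m_k=\arg\min_{m\in\mathcal{H}}\lVert m\rVert^2\quad\text{s.t. } |m(\widetilde\theta_i)-\widetilde y_i|\le\bar\delta\ \ \forall i\in\{1,\dots,N_k\}.$$ Define the feasible set $\mathcal{F}:=\{g\in\mathcal{H}: \lVert g\rVert^2\le\Gamma^2,\ |g(\widetilde\theta_i)-\widetilde y_i|\le\bar\delta\ \forall i=1,\dots,N_k\}$ (so $f\in\mathcal{F}$). Fix $\theta\in\mathbb{R}^{n_\theta}$. (i) With $N=N_k+n_\theta$, the infimum $\inf_{g\in\mathcal{F}}\nabla g(\theta)^\top\nabla m_k(\theta)$ is attained and equals the optimal value of the second-order cone program $$\underline b(\theta):=\min_{\beta\in\mathbb{R}^N}\ \begin{bmatrix}0_{1\times N_k} & \nabla m_k(\theta)^\top\end{bmatrix}\mathfrak{K}(\theta)\beta\quad\text{s.t.}\quad \beta^\top\mathfrak{K}(\theta)\beta\le\Gamma^2,\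 \ |\xi_i^\top\mathfrak{K}(\theta)\beta-\widetilde y_i|\le\bar\delta\ \ \forall i\in\{1,\dots,N_k\},$$ where $\xi_i\in\mathbb{R}^N$ is the $i$-th standard basis vector. In particular $\nabla f(\theta)^\top\nabla m_k(\theta)\ge\underline b(\theta)$. (ii) For any $\mu>0$ and $c\in(0,1)$, let $\theta^+:=\theta-\mu\nabla m_k(\theta)$ and $N=N_k+2+n_\theta$. Then the supremum $\sup_{g\in\mathcal{F}}\big(g(\theta^+)-g(\theta)+c\mu\nabla g(\theta)^\top\nabla m_k(\theta)\big)$ is attained and equals the optimal value of the second-order cone program $$\bar b(\theta,\mu):=\max_{\beta\in\mathbb{R}^N}\ \begin{bmatrix}0_{1\times N_k} & -1 & 1 & c\mu\nabla m_k(\theta)^\top\end{bmatrix}\mathfrak{K}'(\theta,\theta^+)\beta\quad\text{s.t.}\quad\beta^\top\mathfrak{K}'(\theta,\theta^+)\beta\le\Gamma^2,\ \ |\xi_i^\top\mathfrak{K}'(\theta,\theta^+)\beta-\widetilde y_i|\le\bar\delta\ \ \forall i\in\{1,\dots,N_k\},$$ with $\xi_i\in\mathbb{R}^N$ the $i$-th standard basis vector. In particular $f(\theta^+)-f(\theta)+c\mu\nabla f(\theta)^\top\nabla m_k(\theta)\le\bar b(\theta,\mu)$.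
   Context: A kernel is a continuous, symmetric, twice continuously differentiable function $\kappa:\mathbb{R}^{n_\theta}\times\mathbb{R}^{n_\theta}\to\mathbb{R}$ that is positive definite in the sense that for every $N\in\mathbb{N}$ and every $\theta_1,\dots,\theta_N\in\mathbb{R}^{n_\theta}$ the matrix $[\kappa(\theta_i,\theta_j)]_{i,j}$ is positive semidefinite. $\mathcal{H}$ is its unique reproducing kernel Hilbert space (completion of finite sums $\sum_i\alpha_i\kappa(\cdot,\theta_i)$ under $\langle\kappa(\cdot,a),\kappa(\cdot,b)\rangle=\kappa(a,b)$), with norm $\lVert g\rVert=\sqrt{\langle g,g\rangle}$. Notation: $D^{(a,b)}\kappa(\theta,\theta')$ denotes the mixed partial derivative of $\kappa$ of multi-order $a$ in the first argument and $b$ in the second; $e_j\in\mathbb{R}^{n_\theta}$ is the $j$-th standard basis vector. With $\Omega=\{\widetilde\theta_1,\dots,\widetilde\theta_{N_k}\}$: $K_{\Omega\Omega}$ is the $N_k\times N_k$ matrix with entries $\kappa(\widetilde\theta_i,\widetilde\theta_j)$; $K_\Omega(z)=[\kappa(z,\widetilde\theta_1)\ \cdots\ \kappa(z,\widetilde\theta_{N_k})]$ (row vector); $\nabla K_\Omega(z)$ is the $n_\theta\times N_k$ matrix with $(j,i)$ entry $D^{(e_j,0)}\kappa(z,\widetilde\theta_i)$; $\nabla K(a,b):=[D^{(e_1,0)}\kappa(a,b)\ \cdots\ D^{(e_{n_\theta},0)}\kappa(a,b)]^\top\in\mathbb{R}^{n_\theta}$; $D^2_{1,2}\kappa(\theta,\theta)$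 is the $n_\theta\times n_\theta$ matrix with $(i,j)$ entry $D^{(e_i,e_j)}\kappa(\theta,\theta)$. $$\mathfrak{K}(\theta):=\begin{bmatrix}K_{\Omega\Omega} & \nabla K_\Omega(\theta)^\top\\ \nabla K_\Omega(\theta) & D^2_{1,2}\kappa(\theta,\theta)\end{bmatrix},$$ $$\mathfrak{K}'(\theta,\theta^+):=\begin{bmatrix}K_{\Omega\Omega} & K_\Omega(\theta)^\top & K_\Omega(\theta^+)^\top & \nabla K_\Omega(\theta)^\top\\ K_\Omega(\theta) & \kappa(\theta,\theta) & \kappa(\theta,\theta^+) & \nabla K(\theta,\theta)^\top\\ K_\Omega(\theta^+) & \kappa(\theta^+,\theta) & \kappa(\theta^+,\theta^+) & \nabla K(\theta,\theta^+)^\top\\ \nabla K_\Omega(\theta) & \nabla K(\theta,\theta) & \nabla K(\theta,\theta^+) & D^2_{1,2}\kappa(\theta,\theta)\end{bmatrix}.$$ If points among $\widetilde\theta_1,\dots,\widetilde\theta_{N_k},\theta,\theta^+$ coincide, duplicated rows/columns may be removed; this does not change the optimal values. *)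

From HB Require Import structures.
From mathcomp Require Import all_boot all_order all_algebra.
From mathcomp Require Import all_classical all_reals all_analysis.
Set Implicit Arguments. Unset Strict Implicit. Unset Printing Implicit Defensive.
Import Order.TTheory GRing.Theory Num.Theory.
Import numFieldNormedType.Exports.
Local Open Scope ring_scope.

Definition evec {R : realType} {n : nat} (j : 'I_n) : 'rV[R]_n := delta_mx 0 j.

Definition C2_fun {R : realType} {m : nat} (F : 'rV[R]_m -> R) : Prop :=
  continuous F /\
  (forall i p, derivable F p (evec i)) /\
  (forall i, continuous (fun p => derive F p (evec i))) /\
  (forall i j p, derivable (fun q => derive F q (evec i)) p (evec j)) /\
  (forall i j, continuous (fun p => derive (fun q => derive F q (evec i)) p (evec j))).

Definition gram {R : realType} {n N : nat} (kappa : 'rV[R]_n -> 'rV[R]_n -> R)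
  (t : 'I_N -> 'rV[R]_n) : 'M[R]_N := \matrix_(i, j) kappa (t i) (t j).

Definition is_kernel {R : realType} {n : nat} (kappa : 'rV[R]_n -> 'rV[R]_n -> R) : Prop :=
  C2_fun (fun p : 'rV[R]_(n + n) => kappa (lsubmx p) (rsubmx p)) /\
  (forall a b, kappa a b = kappa b a) /\
  (forall (N : nat) (t : 'I_N -> 'rV[R]_n) (a : 'cV[R]_N),
      0 <= (a^T *m gram kappa t *m a) 0 0).

Definition inner_product {R : realType} {V : lmodType R} (ip : V -> V -> R) : Prop :=
  (forall u v, ip u v = ip v u) /\
  (forall (a : R) u v w, ip (a *: u + v) w = a * ip u w + ip v w) /\
  (forall u, 0 <= ip u u) /\
  (forall u, ip u u = 0 -> u = 0).

Definition ipnorm {R : realType} {V : lmodType R} (ip : V -> V -> R) (u : V) : R :=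
  Num.sqrt (ip u u).

Definition ip_complete {R : realType} {V : lmodType R} (ip : V -> V -> R) : Prop :=
  forall u : nat -> V,
    (forall e : R, 0 < e -> exists N : nat, forall p q : nat, (N <= p)%N -> (N <= q)%N ->
        ipnorm ip (u p - u q) < e) ->
    exists l : V, forall e : R, 0 < e -> exists N : nat, forall p : nat, (N <= p)%N ->
        ipnorm ip (u p - l) < e.

(* (V, ip) together with the feature map k (k t = kappa(., t)) is the RKHS of kappa:
   a Hilbert space in which the finite sums sum_i a_i kappa(., t_i) are dense, with
   <kappa(.,a), kappa(.,b)> = kappa(a,b).  An element g is the function t |-> <g, k t>. *)
Definition is_RKHS {R : realType} {n : nat} (kappa : 'rV[R]_n -> 'rV[R]_n -> R)
  {V : lmodType R} (ip : V -> V -> R) (k : 'rV[R]_n -> V) : Prop :=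
  inner_product ip /\ ip_complete ip /\
  (forall a b, ip (k a) (k b) = kappa a b) /\
  (forall (g : V) (e : R), 0 < e -> exists (N : nat) (a : 'I_N -> R) (t : 'I_N -> 'rV[R]_n),
      ipnorm ip (g - \sum_(i < N) a i *: k (t i)) < e).

Definition ev {R : realType} {n : nat} {V : lmodType R} (ip : V -> V -> R)
  (k : 'rV[R]_n -> V) (g : V) : 'rV[R]_n -> R := fun t => ip g (k t).

Definition grad {R : realType} {n : nat} (F : 'rV[R]_n -> R) (x : 'rV[R]_n) : 'rV[R]_n :=
  \row_j derive F x (evec j).

Definition d1 {R : realType} {n : nat} (kappa : 'rV[R]_n -> 'rV[R]_n -> R) (j : 'I_n)
  (a b : 'rV[R]_n) : R := derive (fun x => kappa x b) a (evec j).

Definition d12 {R : realType} {n : nat} (kappa : 'rV[R]_n -> 'rV[R]_n -> R) (i j : 'I_n)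
  (a b : 'rV[R]_n) : R :=
  derive (fun y => derive (fun x => kappa x y) a (evec i)) b (evec j).

Definition interp_ok {R : realType} {n Nk : nat} {V : lmodType R} (ip : V -> V -> R)
  (k : 'rV[R]_n -> V) (th : 'I_Nk -> 'rV[R]_n) (y : 'I_Nk -> R) (delta : R) (g : V) : Prop :=
  forall i, `|ev ip k g (th i) - y i| <= delta.

Definition feasible {R : realType} {n Nk : nat} {V : lmodType R} (ip : V -> V -> R)
  (k : 'rV[R]_n -> V) (th : 'I_Nk -> 'rV[R]_n) (y : 'I_Nk -> R) (delta Gamma : R) (g : V)
  : Prop :=
  ip g g <= Gamma ^+ 2 /\ interp_ok ip k th y delta g.

Definition is_min_norm_interp {R : realType} {n Nk : nat} {V : lmodType R} (ip : V -> V -> R)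
  (k : 'rV[R]_n -> V) (th : 'I_Nk -> 'rV[R]_n) (y : 'I_Nk -> R) (delta : R) (m : V) : Prop :=
  interp_ok ip k th y delta m /\
  (forall g, interp_ok ip k th y delta g -> ip m m <= ip g g).

Definition KO {R : realType} {n Nk : nat} (kappa : 'rV[R]_n -> 'rV[R]_n -> R)
  (th : 'I_Nk -> 'rV[R]_n) (z : 'rV[R]_n) : 'rV[R]_Nk := \row_i kappa z (th i).

Definition gradKO {R : realType} {n Nk : nat} (kappa : 'rV[R]_n -> 'rV[R]_n -> R)
  (th : 'I_Nk -> 'rV[R]_n) (z : 'rV[R]_n) : 'M[R]_(n, Nk) :=
  \matrix_(j, i) d1 kappa j z (th i).

Definition gradK {R : realType} {n : nat} (kappa : 'rV[R]_n -> 'rV[R]_n -> R)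
  (a b : 'rV[R]_n) : 'cV[R]_n := \col_j d1 kappa j a b.

Definition D2K {R : realType} {n : nat} (kappa : 'rV[R]_n -> 'rV[R]_n -> R)
  (z : 'rV[R]_n) : 'M[R]_n := \matrix_(i, j) d12 kappa i j z z.

Definition frakK {R : realType} {n Nk : nat} (kappa : 'rV[R]_n -> 'rV[R]_n -> R)
  (th : 'I_Nk -> 'rV[R]_n) (z : 'rV[R]_n) : 'M[R]_(Nk + n) :=
  block_mx (gram kappa th) (gradKO kappa th z)^T (gradKO kappa th z) (D2K kappa z).

Definition frakK' {R : realType} {n Nk : nat} (kappa : 'rV[R]_n -> 'rV[R]_n -> R)
  (th : 'I_Nk -> 'rV[R]_n) (z zp : 'rV[R]_n) : 'M[R]_(Nk + 2 + n) :=
  let A : 'M[R]_(Nk + 2) :=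
    block_mx (gram kappa th)
             (row_mx (KO kappa th z)^T (KO kappa th zp)^T)
             (col_mx (KO kappa th z) (KO kappa th zp))
             (\matrix_(i < 2, j < 2)
                 kappa (if val i == 0%N then z else zp) (if val j == 0%N then z else zp)) in
  let C : 'M[R]_(n, Nk + 2) :=
    row_mx (gradKO kappa th z) (row_mx (gradK kappa z z) (gradK kappa z zp)) in
  block_mx A C^T C (D2K kappa z).

(* The partial derivatives at [theta] are bounded functionals on the RKHS: the
   difference quotients [(k (theta + h e_j) - k theta) / h] are Cauchy as [h -> 0],
   since their inner products are second difference quotients of [kappa], which
   converge to a mixed derivative by the mean value theorem.  Their limit [v_j]
   represents the derivative, [d_j g (theta) = <g, v_j>].  Hence [frakK] and
   [frakK'] are Gram matrices of the vectors [k th_i], ([k theta], [k theta+]) and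
   [v_j], and both objectives are [<g, w>] with [w] in their span.  Orthogonal
   projection onto that span keeps the constraints and the objective, so the
   problem reduces to coefficient vectors [beta], and the optimum is attained
   because the feasible coordinates in an orthonormal basis form a compact set. *)

From HB Require Import structures.
From mathcomp Require Import all_boot all_order all_algebra.
From mathcomp Require Import all_classical all_reals all_analysis.
From mathcomp Require Import ring lra.
Set Implicit Arguments. Unset Strict Implicit. Unset Printing Implicit Defensive.
Import Order.TTheory GRing.Theory Num.Theory.
Import numFieldNormedType.Exports.
Local Open Scope ring_scope.

Section InnerProduct.
Variables (R : realType) (V : lmodType R) (ip : V -> V -> R).
Hypothesis ip_inner : inner_product ip.

Lemma ipC u v : ip u v = ip v u.
Proof. by case: ip_inner => h _; apply: h. Qed.

Lemma ipDZl a u v w : ip (a *: u + v) w = a * ip u w + ip v w.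
Proof. by case: ip_inner => _ [h _]; apply: h. Qed.

Lemma ip_ge0 u : 0 <= ip u u.
Proof. by case: ip_inner => _ [_ [h _]]; apply: h. Qed.

Lemma ip_eq0 u : ip u u = 0 -> u = 0.
Proof. by case: ip_inner => _ [_ [_ h]]; apply: h. Qed.

Lemma ipDl u v w : ip (u + v) w = ip u w + ip v w.
Proof. by have := ipDZl 1 u v w; rewrite scale1r mul1r. Qed.

Lemma ip0l w : ip 0 w = 0.
Proof. by have := ipDl 0 0 w; rewrite addr0 => h; lra. Qed.

Lemma ipZl a u w : ip (a *: u) w = a * ip u w.
Proof. by rewrite -[a *: u]addr0 ipDZl ip0l addr0. Qed.

Lemma ipNl u w : ip (- u) w = - ip u w.
Proof. by rewrite -scaleN1r ipZl mulN1r. Qed.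

Lemma ipBl u v w : ip (u - v) w = ip u w - ip v w.
Proof. by rewrite ipDl ipNl. Qed.

Lemma ipDr u v w : ip w (u + v) = ip w u + ip w v.
Proof. by rewrite ipC ipDl ![ip _ w]ipC. Qed.

Lemma ipZr a u w : ip w (a *: u) = a * ip w u.
Proof. by rewrite ipC ipZl ipC. Qed.

Lemma ipNr u w : ip w (- u) = - ip w u.
Proof. by rewrite ipC ipNl ipC. Qed.

Lemma ipBr u v w : ip w (u - v) = ip w u - ip w v.
Proof. by rewrite ipDr ipNr. Qed.

Lemma ip_suml I (r : seq I) (P : pred I) (F : I -> V) w :
  ip (\sum_(i <- r | P i) F i) w = \sum_(i <- r | P i) ip (F i) w.
Proof. by elim/big_rec2: _ => [|i y1 y2 _ <-]; rewrite ?ip0l ?ipDl. Qed.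

Lemma ip_sumr I (r : seq I) (P : pred I) (F : I -> V) w :
  ip w (\sum_(i <- r | P i) F i) = \sum_(i <- r | P i) ip w (F i).
Proof. by rewrite ipC ip_suml; apply: eq_bigr => i _; rewrite ipC. Qed.

Lemma ipnorm_le x c : 0 <= c -> (ipnorm ip x <= c) = (ip x x <= c ^+ 2).
Proof. by move=> c0; rewrite /ipnorm -[in RHS]ler_sqrt ?exprn_ge0 // sqrtr_sqr ger0_norm. Qed.

Lemma ipnorm_lt x c : 0 < c -> (ipnorm ip x < c) = (ip x x < c ^+ 2).
Proof. by move=> c0; rewrite /ipnorm -[in RHS]ltr_sqrt ?exprn_gt0 // sqrtr_sqr gtr0_norm. Qed.

Lemma ip_AMGM g x t : 2 * t * ip g x <= ip g g + t ^+ 2 * ip x x.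
Proof.
have := ip_ge0 (g - t *: x); rewrite ipBl !ipBr !ipZl !ipZr (ipC x g).
move=> h; rewrite -subr_ge0; apply: le_trans h _; rewrite le_eqVlt; apply/orP; left.
by apply/eqP; ring.
Qed.

Lemma ipDD_le a b : ip (a + b) (a + b) <= 2 * ip a a + 2 * ip b b.
Proof.
have := ip_ge0 (a - b); rewrite ipBl !ipBr ipDl !ipDr (ipC b a); lra.
Qed.

Lemma ipDD_orthogonal a b : ip a b = 0 -> ip (a + b) (a + b) = ip a a + ip b b.
Proof. by move=> h; rewrite ipDl !ipDr h [ip b a]ipC h addr0 add0r. Qed.

(* A quantitative continuity of [ip g] at [0]: the AM-GM bound with
   [t = 2 (ip g g + 1) / e], applied to [x] and [- x]. *)
Lemma normr_ip_lt g x e : 0 < e -> ip x x < e ^+ 2 / (4 * (ip g g + 1)) ->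
  `|ip g x| < e.
Proof.
move=> e0 hx; have g0 := ip_ge0 g; have gp : 0 < ip g g + 1 by lra.
set t := 2 * (ip g g + 1) / e.
have t0 : 0 < t by rewrite /t divr_gt0 // mulr_gt0.
have key z : ip z z = ip x x -> 2 * ip g z < e.
  move=> hz; rewrite -(ltr_pM2l t0) mulrA (mulrC t).
  apply: le_lt_trans (ip_AMGM g z t) _; rewrite hz.
  have h1 : t ^+ 2 * ip x x < t ^+ 2 * (e ^+ 2 / (4 * (ip g g + 1))).
    by rewrite ltr_pM2l // exprn_gt0.
  have e1 : t ^+ 2 * (e ^+ 2 / (4 * (ip g g + 1))) = ip g g + 1.
    by rewrite /t; field; rewrite gt_eqF // gt_eqF.
  have e2 : t * e = 2 * (ip g g + 1) by rewrite /t; field; rewrite gt_eqF.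
  lra.
have k1 := key x erefl; have := key (- x); rewrite ipNl ipNr opprK ipNr => /(_ erefl) k2.
rewrite ltr_norml; apply/andP; split; lra.
Qed.

Definition in_span N (u : 'I_N -> V) x := exists a : 'I_N -> R, x = \sum_i a i *: u i.

Definition orthonormal r (o : 'I_r -> V) := forall i j, ip (o i) (o j) = (i == j)%:R.

Lemma in_span0 N (u : 'I_N -> V) : in_span u 0.
Proof. by exists (fun=> 0); rewrite big1 // => i _; rewrite scale0r. Qed.

Lemma in_spanZ N (u : 'I_N -> V) c x : in_span u x -> in_span u (c *: x).
Proof.
move=> [a ->]; exists (fun i => c * a i).
by rewrite scaler_sumr; apply: eq_bigr => i _; rewrite scalerA.
Qed.

Lemma in_spanD N (u : 'I_N -> V) x z : in_span u x -> in_span u z -> in_span u (x + z).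
Proof.
move=> [a ->] [b ->]; exists (fun i => a i + b i).
by rewrite -big_split; apply: eq_bigr => i _; rewrite scalerDl.
Qed.

Lemma in_span_sum N (u : 'I_N -> V) I (r : seq I) (P : pred I) (F : I -> V) :
  (forall i, P i -> in_span u (F i)) -> in_span u (\sum_(i <- r | P i) F i).
Proof. by move=> hF; elim/big_rec: _ => [|i x /hF]; [apply: in_span0 | apply: in_spanD]. Qed.

Lemma in_span_gen N (u : 'I_N -> V) a : in_span u (u a).
Proof.
exists (fun i => (i == a)%:R); rewrite (bigD1 a) //= eqxx scale1r big1 ?addr0 //.
by move=> i /negbTE ->; rewrite scale0r.
Qed.

Lemma in_span_trans N M (u : 'I_N -> V) (v : 'I_M -> V) x :
  (forall j, in_span u (v j)) -> in_span v x -> in_span u x.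
Proof. by move=> hv [a ->]; apply: in_span_sum => j _; apply: in_spanZ. Qed.

Lemma ip_sum_orthonormal r (o : 'I_r -> V) (a : 'I_r -> R) j : orthonormal o ->
  ip (\sum_i a i *: o i) (o j) = a j.
Proof.
move=> ho; rewrite ip_suml (bigD1 j) //= ipZl ho eqxx mulr1 big1 ?addr0 //.
by move=> i /negbTE nij; rewrite ipZl ho nij mulr0.
Qed.

Definition proj r (o : 'I_r -> V) x := \sum_i ip x (o i) *: o i.

Lemma proj_in_span r (o : 'I_r -> V) x : in_span o (proj o x).
Proof. by exists (fun i => ip x (o i)). Qed.

Lemma ip_proj_orthogonal r (o : 'I_r -> V) x z : orthonormal o -> in_span o z ->
  ip (x - proj o x) z = 0.
Proof.
move=> ho [a ->]; rewrite ip_sumr big1 // => i _.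
by rewrite ipZr ipBl ip_sum_orthonormal // subrr mulr0.
Qed.

Lemma ip_proj_span r (o : 'I_r -> V) x z : orthonormal o -> in_span o z ->
  ip (proj o x) z = ip x z.
Proof. by move=> ho /(ip_proj_orthogonal x ho); rewrite ipBl => /eqP; rewrite subr_eq0 => /eqP. Qed.

Lemma ip_proj_le r (o : 'I_r -> V) x : orthonormal o ->
  ip (proj o x) (proj o x) <= ip x x.
Proof.
move=> ho; set p := proj o x.
have hp : ip (x - p) p = 0 by apply: ip_proj_orthogonal => //; apply: proj_in_span.
by rewrite -[X in _ <= ip X X](subrK p x) (ipDD_orthogonal hp) lerDr ip_ge0.
Qed.

Definition extend_by r (o : 'I_r -> V) (x : V) (i : 'I_r.+1) : V :=
  if unlift ord_max i is Some j then o j else x.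

Lemma extend_by_lift r (o : 'I_r -> V) x j : extend_by o x (lift ord_max j) = o j.
Proof. by rewrite /extend_by liftK. Qed.

Lemma extend_by_max r (o : 'I_r -> V) x : extend_by o x ord_max = x.
Proof. by rewrite /extend_by unlift_none. Qed.

Lemma orthonormal_extend_by r (o : 'I_r -> V) x : orthonormal o ->
  ip x x = 1 -> (forall j, ip x (o j) = 0) -> orthonormal (extend_by o x).
Proof.
move=> ho x1 xo i j.
case: (unliftP ord_max i) => [i1 -> | ->]; case: (unliftP ord_max j) => [j1 -> | ->];
  rewrite ?extend_by_lift ?extend_by_max.
- by rewrite ho (inj_eq lift_inj).
- by rewrite ipC xo eq_sym (negbTE (neq_lift _ _)).
- by rewrite xo (negbTE (neq_lift _ _)).
- by rewrite x1 eqxx.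
Qed.

Lemma in_span_extend_by r (o : 'I_r -> V) x z : in_span o z -> in_span (extend_by o x) z.
Proof.
by apply: in_span_trans => j; rewrite -(extend_by_lift o x); apply: in_span_gen.
Qed.

Lemma gram_schmidt N (u : 'I_N -> V) : exists r (ob : 'I_r -> V),
  orthonormal ob /\ (forall a, in_span ob (u a)) /\ (forall i, in_span u (ob i)).
Proof.
elim: N u => [|N IH] u; first by exists 0%N, (fun=> 0); split; [case | split; case].
have [r [ob [ho [uo ou]]]] := IH (fun a => u (lift ord_max a)).
have ou' i : in_span u (ob i) by apply: in_span_trans (ou i) => j; apply: in_span_gen.
set w := u ord_max - proj ob (u ord_max).
have wo j : ip w (ob j) = 0 by apply: ip_proj_orthogonal => //; apply: in_span_gen.
have uw : u ord_max = proj ob (u ord_max) + w by rewrite addrC subrK.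
have [w0|wn0] := eqVneq (ip w w) 0.
  exists r, ob; split=> //; split=> // a.
  case: (unliftP ord_max a) => [j -> | ->]; first exact: uo.
  by rewrite uw (ip_eq0 w0) addr0; apply: proj_in_span.
have sq0 : 0 < Num.sqrt (ip w w) by rewrite sqrtr_gt0 lt_def wn0 ip_ge0.
set c := (Num.sqrt (ip w w))^-1; set e := c *: w.
have we : w = Num.sqrt (ip w w) *: e by rewrite /e scalerA mulfV ?scale1r // gt_eqF.
exists r.+1, (extend_by ob e); split; last split.
- apply: orthonormal_extend_by => // [|j]; last by rewrite ipZl wo mulr0.
  by rewrite ipZl ipZr mulrA -expr2 exprVn sqr_sqrtr ?ip_ge0 // mulVf.
- move=> a; case: (unliftP ord_max a) => [j -> | ->]; first exact/in_span_extend_by/uo.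
  rewrite uw; apply: in_spanD; first exact/in_span_extend_by/proj_in_span.
  rewrite we; apply: in_spanZ.
  by have := in_span_gen (extend_by ob e) ord_max; rewrite extend_by_max.
- move=> i; case: (unliftP ord_max i) => [j -> | ->]; rewrite ?extend_by_lift ?extend_by_max //.
  apply/in_spanZ/in_spanD; first exact: in_span_gen.
  by rewrite -scaleN1r; apply/in_spanZ/in_span_sum => j _; apply/in_spanZ/ou'.
Qed.

Definition ip_feasible M (cs : 'I_M -> V) (y : 'I_M -> R) (delta G : R) x :=
  ip x x <= G ^+ 2 /\ forall m, `|ip x (cs m) - y m| <= delta.

Lemma ip_feasible_proj r (o : 'I_r -> V) M (cs : 'I_M -> V) y delta G x :
  orthonormal o -> (forall m, in_span o (cs m)) ->
  ip_feasible cs y delta G x -> ip_feasible cs y delta G (proj o x).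
Proof.
move=> ho hcs [xG xc]; split; first exact: le_trans (ip_proj_le x ho) xG.
by move=> m; rewrite ip_proj_span.
Qed.

Definition comb r (o : 'I_r -> V) (b : 'rV[R]_r) := \sum_i b 0 i *: o i.

Lemma ip_combl r (o : 'I_r -> V) b z : ip (comb o b) z = \sum_i b 0 i * ip (o i) z.
Proof. by rewrite ip_suml; apply: eq_bigr => i _; rewrite ipZl. Qed.

Lemma ip_comb_orthonormal r (o : 'I_r -> V) b : orthonormal o ->
  ip (comb o b) (comb o b) = \sum_i b 0 i ^+ 2.
Proof.
by move=> ho; rewrite ip_combl; apply: eq_bigr => i _; rewrite ipC ip_sum_orthonormal.
Qed.

Lemma proj_comb r (o : 'I_r -> V) x : proj o x = comb o (\row_i ip x (o i)).
Proof. by apply: eq_bigr => i _; rewrite mxE. Qed.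

Lemma continuous_ip_combl r (o : 'I_r -> V) z : continuous (fun b => ip (comb o b) z).
Proof.
under [fun b => _]funext do rewrite ip_combl.
apply: continuous_big => [|i _ b]; first exact: add_continuous.
by apply: continuousM; [exact: coord_continuous | exact: cst_continuous].
Qed.

Lemma closed_comb_feasible r (o : 'I_r -> V) M (cs : 'I_M -> V) y delta G :
  orthonormal o -> closed [set b | ip_feasible cs y delta G (comb o b)].
Proof.
move=> ho; pose sq (b : 'rV[R]_r) := \sum_i b 0 i ^+ 2.
have sq_cont : continuous sq.
  apply: continuous_big => [|i _]; first exact: add_continuous.
  under [fun b => _]funext do rewrite expr2.
  by move=> b; apply: continuousM; exact: coord_continuous.
have -> : [set b | ip_feasible cs y delta G (comb o b)]%classic =
    (sq @^-1` [set t | t <= G ^+ 2] `&` \bigcap_(m in setT)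
      ((fun b => `|ip (comb o b) (cs m) - y m|) @^-1` [set t | t <= delta]))%classic.
  apply/seteqP; split=> b /=; rewrite /ip_feasible ip_comb_orthonormal //.
    by move=> [bG bc]; split=> // m _; apply: bc.
  by move=> [bG bc]; split=> // m; apply: bc.
apply: closedI; first by apply: preimage_closed => [b _|]; [exact: sq_cont | exact: closed_le].
apply: closed_bigI => m _; apply: preimage_closed => [b _|]; last exact: closed_le.
apply: (continuous_comp (f := fun b => ip (comb o b) (cs m) - y m)); last exact: norm_continuous.
by apply: continuousB; [exact: continuous_ip_combl | exact: cst_continuous].
Qed.

Lemma bounded_comb_feasible r (o : 'I_r -> V) M (cs : 'I_M -> V) y delta G :
  orthonormal o -> bounded_set [set b | ip_feasible cs y delta G (comb o b)]%classic.
Proof.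
move=> ho; exists `|G|; split; first exact: normr_real.
move=> Mb hM b /= []; rewrite ip_comb_orthonormal // => hb _.
rewrite [X in X <= _]/Num.norm /= mx_normrE; apply/bigmax_leP; split.
  exact: le_trans (ltW hM).
move=> [i j] _ /=; apply: le_trans (ltW hM); rewrite -ler_sqr ?nnegrE //.
rewrite !real_normK ?num_real //; apply: le_trans hb.
rewrite (bigD1 j) //= (ord1 i) lerDl; apply: sumr_ge0 => l _; exact: sqr_ge0.
Qed.

(* Projecting onto an orthonormal basis of the span reduces the problem to
   minimising a continuous function on a compact set of coordinates. *)
Lemma ip_feasible_min N (u : 'I_N -> V) M (cs : 'I_M -> V) y delta G w x1 :
  (forall m, in_span u (cs m)) -> in_span u w -> ip_feasible cs y delta G x1 ->
  exists2 x0, in_span u x0 & ip_feasible cs y delta G x0 /\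
    forall x, ip_feasible cs y delta G x -> ip x0 w <= ip x w.
Proof.
move=> hcs hw hx1; have [r [ob [ho [uo ou]]]] := gram_schmidt u.
have hw' := in_span_trans uo hw.
pose A := [set b | ip_feasible cs y delta G (comb ob b)]%classic.
have coordA x : ip_feasible cs y delta G x -> A (\row_i ip x (ob i)).
  by rewrite /A /= -proj_comb; apply: ip_feasible_proj => // m; apply: in_span_trans uo _.
have A0 : (A !=set0)%classic by exists (\row_i ip x1 (ob i)); apply: coordA.
have Acompact : compact A.
  by apply: bounded_closed_compact; [apply: bounded_comb_feasible | apply: closed_comb_feasible].
have [b0 /[!inE] b0A b0min] :=
  EVT_min_rV A0 Acompact (continuous_subspaceT (@continuous_ip_combl _ ob w)).
exists (comb ob b0); first by apply: in_span_sum => i _; apply/in_spanZ/ou.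
split=> // x hx; rewrite -(ip_proj_span x ho hw') proj_comb.
by apply: b0min; rewrite inE; apply: coordA.
Qed.

End InnerProduct.

Lemma is_derive_along_line (R : realType) m (F : 'rV[R]_m -> R) (p v : 'rV[R]_m) (s : R) :
  derivable F (s *: v + p) v ->
  is_derive s 1 (fun s => F (s *: v + p)) (derive F (s *: v + p) v).
Proof.
move=> hd.
have quotE : (fun h : R => h^-1 *: (((fun s => F (s *: v + p)) \o shift s) (h *: 1)
                 - F (s *: v + p))) =
             (fun h : R => h^-1 *: ((F \o shift (s *: v + p)) (h *: v) - F (s *: v + p))).
  apply: funext => h /=; congr (_ *: (F _ - _)).
  by rewrite [h *: 1]mulr1 scalerDl addrA.
have hd' : derivable (fun s : R => F (s *: v + p)) s 1 by rewrite /derivable quotE.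
by apply: DeriveDef => //; rewrite /derive quotE.
Qed.

Lemma MVT_between (R : realType) (f df : R -> R) (a b : R) :
  (forall x : R, is_derive x (1 : R) f (df x)) ->
  exists c, `|c - a| <= `|b - a| /\ f b - f a = df c * (b - a).
Proof.
move=> hf.
have fc a' b' : {within `[a', b'], continuous f}%classic.
  by apply: derivable_within_continuous => x _; case: (hf x).
have [hab|hba] := lerP a b.
  have [c /[!in_itv]/= /andP[ac cb] e] := MVT_segment hab (fun x _ => hf x) (fc a b).
  by exists c; rewrite !ger0_norm ?subr_ge0 // lerD2r.
have [c /[!in_itv]/= /andP[bc ca] e] := MVT_segment (ltW hba) (fun x _ => hf x) (fc b a).
exists c; split; first by rewrite !ler0_norm ?subr_le0 ?(ltW hba) //; lra.
by rewrite -opprB e -mulrN opprB.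
Qed.

Lemma evec_lshift (R : realType) n (j : 'I_n) :
  (evec (lshift n j) : 'rV[R]_(n + n)) = row_mx (evec j) 0.
Proof.
apply/matrixP => i l; rewrite -[l]splitK.
case: (fintype.split l) => l' /=; rewrite ?row_mxEl ?row_mxEr /evec !mxE.
  by rewrite (inj_eq (@lshift_inj _ _)).
by rewrite eq_rlshift andbF.
Qed.

Lemma evec_rshift (R : realType) n (j : 'I_n) :
  (evec (rshift n j) : 'rV[R]_(n + n)) = row_mx 0 (evec j).
Proof.
apply/matrixP => i l; rewrite -[l]splitK.
case: (fintype.split l) => l' /=; rewrite ?row_mxEl ?row_mxEr /evec !mxE.
  by rewrite eq_lrshift andbF.
by rewrite (inj_eq (@rshift_inj _ _)).
Qed.

Section SecondDifference.
Variables (R : realType) (n : nat) (kappa : 'rV[R]_n -> 'rV[R]_n -> R).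
Hypothesis kappa_C2 : C2_fun (fun p : 'rV[R]_(n + n) => kappa (lsubmx p) (rsubmx p)).
Variables (theta : 'rV[R]_n) (j : 'I_n).

Local Notation F := (fun p : 'rV[R]_(n + n) => kappa (lsubmx p) (rsubmx p)).
Local Notation e := (evec j : 'rV[R]_n).
Local Notation P s t := (row_mx (s *: e + theta) (t *: e + theta)).
Local Notation G s t := (kappa (s *: e + theta) (t *: e + theta)).
Local Notation D1 := (fun p => derive F p (evec (lshift n j))).
Local Notation D12 := (fun p => derive D1 p (evec (rshift n j))).

Lemma is_derive_kappa_fst (t s : R) : is_derive s 1 (fun s => G s t) (D1 (P s t)).
Proof.
have [_ [dF _]] := kappa_C2.
have PE s' : P s' t = s' *: evec (lshift n j) + row_mx theta (t *: e + theta).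
  by rewrite evec_lshift scale_row_mx add_row_mx scaler0 add0r.
have := is_derive_along_line (p := row_mx theta (t *: e + theta)) (s := s) (dF (lshift n j) _).
by rewrite -PE; under eq_fun do rewrite -PE row_mxKl row_mxKr.
Qed.

Lemma is_derive_D1_snd (s t : R) : is_derive t 1 (fun t => D1 (P s t)) (D12 (P s t)).
Proof.
have [_ [_ [_ [dD1 _]]]] := kappa_C2.
have PE t' : P s t' = t' *: evec (rshift n j) + row_mx (s *: e + theta) theta.
  by rewrite evec_rshift scale_row_mx add_row_mx scaler0 add0r.
have := is_derive_along_line (p := row_mx (s *: e + theta) theta) (s := t)
  (dD1 (lshift n j) (rshift n j) _).
by rewrite -PE; under eq_fun do rewrite -PE.
Qed.

Lemma second_difference_MVT h h' : exists s t, `|s| <= `|h| /\ `|t| <= `|h'| /\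
  G h h' - G h 0 - G 0 h' + G 0 0 = h * h' * D12 (P s t).
Proof.
have dphi (s : R) : is_derive s (1 : R) (fun s => G s h' - G s 0) (D1 (P s h') - D1 (P s 0)).
  by apply: is_deriveB; apply: is_derive_kappa_fst.
have [s [hs es]] := MVT_between 0 h dphi.
have [t [ht et]] := MVT_between 0 h' (is_derive_D1_snd s).
exists s, t; rewrite !subr0 in hs ht es et; split=> //; split=> //.
have -> : G h h' - G h 0 - G 0 h' + G 0 0 = (G h h' - G h 0) - (G 0 h' - G 0 0) by ring.
by rewrite es et; ring.
Qed.

Lemma norm_row_mx_evec_le (a b : R) : `|row_mx (a *: e) (b *: e)| <= `|a| + `|b|.
Proof.
rewrite [X in X <= _]/Num.norm /= mx_normrE; apply/bigmax_leP; split; first by rewrite addr_ge0.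
move=> [i l] _ /=; rewrite -[l]splitK.
by case: (fintype.split l) => l' /=; rewrite ?row_mxEl ?row_mxEr !mxE;
  case: (_ && _); rewrite /= ?mulr0 ?mulr1 ?normr0 ?addr_ge0 ?lerDl ?lerDr.
Qed.

Lemma mixed_derivative_near eps : 0 < eps -> exists2 eta, 0 < eta &
  forall s t, `|s| < eta -> `|t| < eta -> `|D12 (P s t) - D12 (P 0 0)| < eps.
Proof.
move=> eps0; have [_ [_ [_ [_ cont]]]] := kappa_C2.
move: (cont (lshift n j) (rshift n j) (P 0 0)) => /cvgrPdist_lt /(_ eps eps0).
move=> /nbhs_ballP [r r0 hr]; exists (r / 2) => [|s t hs ht]; first by rewrite divr_gt0.
rewrite -normrN opprB; apply: hr; rewrite -ball_normE /ball_ /=.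
have -> : P 0 0 - P s t = row_mx ((- s) *: e) ((- t) *: e).
  rewrite opp_row_mx add_row_mx !scale0r !add0r !scaleNr.
  by congr row_mx; rewrite opprD addrCA subrr addr0.
apply: le_lt_trans (norm_row_mx_evec_le _ _) _.
by rewrite !normrN [ltRHS]splitr; apply: ltrD.
Qed.

Lemma second_difference_quotient_near eps : 0 < eps -> exists2 eta, 0 < eta &
  forall h h', h != 0 -> h' != 0 -> `|h| < eta -> `|h'| < eta ->
  `|(G h h' - G h 0 - G 0 h' + G 0 0) / (h * h') - D12 (P 0 0)| < eps.
Proof.
move=> eps0; have [eta eta0 heta] := mixed_derivative_near eps0.
exists eta => // h h' hn hn' hh hh'.
have [s [t [hs [ht ->]]]] := second_difference_MVT h h'.
rewrite mulrC mulrA mulVf ?mul1r ?mulf_neq0 //.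
by apply: heta; [apply: le_lt_trans hh | apply: le_lt_trans hh'].
Qed.

End SecondDifference.

Section DerivativeRepresenter.
Variables (R : realType) (n : nat) (kappa : 'rV[R]_n -> 'rV[R]_n -> R).
Hypothesis kappa_C2 : C2_fun (fun p : 'rV[R]_(n + n) => kappa (lsubmx p) (rsubmx p)).
Variables (V : lmodType R) (ip : V -> V -> R) (k : 'rV[R]_n -> V).
Hypotheses (ip_inner : inner_product ip) (ip_feature : forall a b, ip (k a) (k b) = kappa a b).
Hypothesis ip_cauchy_complete : ip_complete ip.
Variables (theta : 'rV[R]_n) (j : 'I_n).

Local Notation e := (evec j : 'rV[R]_n).
Local Notation G s t := (kappa (s *: e + theta) (t *: e + theta)).

Definition dquot (h : R) : V := h^-1 *: (k (h *: e + theta) - k theta).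

Lemma ip_dquot h h' : ip (dquot h) (dquot h') = (G h h' - G h 0 - G 0 h' + G 0 0) / (h * h').
Proof.
rewrite !scale0r !add0r /dquot (ipZl ip_inner) (ipZr ip_inner) (ipBl ip_inner).
by rewrite !(ipBr ip_inner) !ip_feature invfM; ring.
Qed.

(* The inner products of difference quotients are second difference quotients
   of [kappa], which all converge to the same mixed derivative. *)
Lemma dquot_cauchy eps : 0 < eps -> exists2 eta, 0 < eta &
  forall h h', h != 0 -> h' != 0 -> `|h| < eta -> `|h'| < eta ->
  ip (dquot h - dquot h') (dquot h - dquot h') < eps.
Proof.
move=> eps0; have eps4 : 0 < eps / 4 by rewrite divr_gt0.
have [eta eta0 heta] := second_difference_quotient_near kappa_C2 theta j eps4.
exists eta => // h h' hn hn' hh hh'.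
rewrite (ipBl ip_inner) !(ipBr ip_inner) (ipC ip_inner (dquot h')) !ip_dquot.
move: (heta h h hn hn hh hh) (heta h h' hn hn' hh hh') (heta h' h' hn' hn' hh' hh').
move: (_ / (h * h)) (_ / (h * h')) (_ / (h' * h')) => a b c.
rewrite !ltr_norml => /andP[? ?] /andP[? ?] /andP[? ?]; lra.
Qed.

Lemma dquot_cvg : exists v, forall eps, 0 < eps -> exists2 eta, 0 < eta &
  forall h, h != 0 -> `|h| < eta -> ip (v - dquot h) (v - dquot h) < eps.
Proof.
pose us m := dquot (m.+1%:R^-1).
have usn m : (m.+1%:R : R)^-1 != 0 by rewrite invr_neq0 // pnatr_eq0.
have us_small eta : 0 < eta -> exists M, forall m, (M <= m)%N -> `|(m.+1%:R : R)^-1| < eta.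
  move=> eta0; have [M _ hM] := near_infty_natSinv_lt (PosNum eta0).
  by exists M => m /hM; rewrite gtr0_norm // invr_gt0 ltr0Sn.
have [v hv] : exists v, forall eps, 0 < eps ->
    exists N, forall p, (N <= p)%N -> ipnorm ip (us p - v) < eps.
  apply: ip_cauchy_complete => eps eps0.
  have [eta eta0 heta] := dquot_cauchy (exprn_gt0 2 eps0).
  have [M hM] := us_small _ eta0.
  by exists M => p q hp hq; rewrite ipnorm_lt //; apply: heta; rewrite ?usn ?hM.
exists v => eps eps0; have eps4 : 0 < eps / 4 by rewrite divr_gt0.
have [eta eta0 heta] := dquot_cauchy eps4.
have [M1 hM1] := us_small _ eta0.
have sq0 : 0 < Num.sqrt (eps / 4) by rewrite sqrtr_gt0.
have [M2 hM2] := hv _ sq0.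
exists eta => // h hn hh; pose p := maxn M1 M2.
have e1 : ip (us p - dquot h) (us p - dquot h) < eps / 4.
  by apply: heta; rewrite ?usn ?hM1 ?leq_maxl.
have e2 : ip (us p - v) (us p - v) < eps / 4.
  by rewrite -(sqr_sqrtr (ltW eps4)) -ipnorm_lt ?sqrtr_gt0 // hM2 ?leq_maxr.
have -> : v - dquot h = (us p - dquot h) + - (us p - v).
  by rewrite opprB [RHS]addrC addrA subrK.
apply: le_lt_trans (ipDD_le ip_inner _ _) _.
rewrite (ipNl ip_inner) (ipNr ip_inner) opprK; lra.
Qed.

Lemma derive_ev_rep : exists v, forall g,
  derivable (ev ip k g) theta e /\ derive (ev ip k g) theta e = ip g v.
Proof.
have [v hv] := dquot_cvg.
have lim g : ((fun h => h^-1 *: ((ev ip k g \o shift theta) (h *: e) - ev ip k g theta))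
    @ 0^' --> ip g v)%classic.
  apply/cvgrPdist_lt => eps eps0; have g1 : 0 < ip g g + 1 by have := ip_ge0 ip_inner g; lra.
  have tau0 : 0 < eps ^+ 2 / (4 * (ip g g + 1)) by rewrite divr_gt0 ?exprn_gt0 ?mulr_gt0.
  have [eta eta0 heta] := hv _ tau0.
  exists eta => //= h hh hn; rewrite /ev /=.
  have -> : h^-1 *: (ip g (k (h *: e + theta)) - ip g (k theta)) = ip g (dquot h).
    by rewrite /dquot (ipZr ip_inner) (ipBr ip_inner).
  rewrite -(ipBr ip_inner).
  apply: normr_ip_lt => //; apply: heta => //.
  by move: hh; rewrite /ball_ /= distrC subr0.
exists v => g; split; first by apply/cvg_ex; exists (ip g v); exact: lim.
by rewrite /derive; apply: cvg_lim => //; exact: lim.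
Qed.

End DerivativeRepresenter.

Section GramProgram.
Variables (R : realType) (V : lmodType R) (ip : V -> V -> R).
Hypothesis ip_inner : inner_product ip.

Lemma gram_form N (K : 'M[R]_N) (u : 'I_N -> V) (a : 'rV[R]_N) (b : 'cV[R]_N) :
  (forall i j, K i j = ip (u i) (u j)) ->
  (a *m K *m b) 0 0 = ip (\sum_i a 0 i *: u i) (\sum_j b j 0 *: u j).
Proof.
move=> hK; rewrite mxE (ip_sumr ip_inner); apply: eq_bigr => j _.
rewrite (ipZr ip_inner) mulrC mxE (ip_suml ip_inner); congr (_ * _).
by apply: eq_bigr => i _; rewrite (ipZl ip_inner) hK.
Qed.

Lemma sum_delta_mx_scale N (u : 'I_N -> V) (i0 : 'I_N) :
  \sum_i (delta_mx i0 0 : 'cV[R]_N)^T 0 i *: u i = u i0.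
Proof.
rewrite (bigD1 i0) //= !mxE !eqxx /= scale1r big1 ?addr0 // => i /negbTE h.
by rewrite !mxE h /= scale0r.
Qed.

(* The coefficient vectors [b] parametrise the candidates [\sum_j b j 0 *: u j],
   to which [ip_feasible_min] reduces the problem over [V]. *)
Lemma gram_program_min n Nk N (k : 'rV[R]_n -> V) (th : 'I_Nk -> 'rV[R]_n)
  (u : 'I_N -> V) (idx : 'I_Nk -> 'I_N) (K : 'M[R]_N) (y : 'I_Nk -> R) (delta Gamma : R)
  (cvec : 'rV[R]_N) (w : V) (obj : V -> R) (f : V) :
  (forall a c, K a c = ip (u a) (u c)) ->
  (forall i, u (idx i) = k (th i)) ->
  (forall g, obj g = ip g w) ->
  \sum_a cvec 0 a *: u a = w ->
  feasible ip k th y delta Gamma f ->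
  let sobj (b : 'cV[R]_N) : R := (cvec *m K *m b) 0 0 in
  let sfeas (b : 'cV[R]_N) : Prop :=
     (b^T *m K *m b) 0 0 <= Gamma ^+ 2 /\
     (forall i, `|((delta_mx (idx i) 0 : 'cV[R]_N)^T *m K *m b) 0 0 - y i| <= delta) in
  exists g0 : V,
    feasible ip k th y delta Gamma g0 /\
    (forall g, feasible ip k th y delta Gamma g -> obj g0 <= obj g) /\
    (exists b, sfeas b /\ sobj b = obj g0) /\
    (forall b, sfeas b -> obj g0 <= sobj b) /\
    obj g0 <= obj f.
Proof.
move=> hK hu hobj hw hf sobj sfeas.
pose gb (b : 'cV[R]_N) := \sum_j b j 0 *: u j.
have sobjE b : sobj b = obj (gb b) by rewrite /sobj (gram_form _ _ hK) hw hobj (ipC ip_inner).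
have sfeasE b : sfeas b <-> feasible ip k th y delta Gamma (gb b).
  rewrite /sfeas (gram_form _ _ hK).
  have -> : \sum_i b^T 0 i *: u i = gb b by apply: eq_bigr => i _; rewrite mxE.
  split=> -[bG bc]; split=> // i; move: (bc i);
    by rewrite /ev (gram_form _ _ hK) sum_delta_mx_scale hu (ipC ip_inner).
have hspan i : in_span u (k (th i)) by rewrite -hu; apply: in_span_gen.
have [x0 [beta x0E] [hx0 hmin]] :=
  ip_feasible_min ip_inner hspan (ex_intro _ (fun a => cvec 0 a) (esym hw)) hf.
have gbE : gb (\col_a beta a) = x0 by rewrite x0E; apply: eq_bigr => a _; rewrite mxE.
exists x0; split=> //; split; first by move=> g hg; rewrite !hobj; apply: hmin.
split; first by exists (\col_a beta a); rewrite sfeasE sobjE gbE.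
split; first by move=> b /sfeasE hb; rewrite sobjE !hobj; apply: hmin.
by rewrite !hobj; apply: hmin.
Qed.

Lemma gram_program_max n Nk N (k : 'rV[R]_n -> V) (th : 'I_Nk -> 'rV[R]_n)
  (u : 'I_N -> V) (idx : 'I_Nk -> 'I_N) (K : 'M[R]_N) (y : 'I_Nk -> R) (delta Gamma : R)
  (cvec : 'rV[R]_N) (w : V) (obj : V -> R) (f : V) :
  (forall a c, K a c = ip (u a) (u c)) ->
  (forall i, u (idx i) = k (th i)) ->
  (forall g, obj g = ip g w) ->
  \sum_a cvec 0 a *: u a = w ->
  feasible ip k th y delta Gamma f ->
  let sobj (b : 'cV[R]_N) : R := (cvec *m K *m b) 0 0 in
  let sfeas (b : 'cV[R]_N) : Prop :=
     (b^T *m K *m b) 0 0 <= Gamma ^+ 2 /\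
     (forall i, `|((delta_mx (idx i) 0 : 'cV[R]_N)^T *m K *m b) 0 0 - y i| <= delta) in
  exists g0 : V,
    feasible ip k th y delta Gamma g0 /\
    (forall g, feasible ip k th y delta Gamma g -> obj g <= obj g0) /\
    (exists b, sfeas b /\ sobj b = obj g0) /\
    (forall b, sfeas b -> sobj b <= obj g0) /\
    obj f <= obj g0.
Proof.
move=> hK hu hobj hw hf sobj sfeas.
have hobjN g : - obj g = ip g (- w) by rewrite hobj (ipNr ip_inner).
have hwN : \sum_a (- cvec) 0 a *: u a = - w.
  by rewrite -hw -sumrN; apply: eq_bigr => a _; rewrite mxE scaleNr.
have [g0 [hg0 [gmin [[b [hb bE]] [bmin fmin]]]]] := gram_program_min hK hu hobjN hwN hf.
have sobjN b' : ((- cvec) *m K *m b') 0 0 = - sobj b' by rewrite /sobj !mulNmx mxE.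
exists g0; split=> //; split; first by move=> g /gmin; rewrite lerN2.
split; first by exists b; split=> //; apply: oppr_inj; rewrite -sobjN.
by split=> [b' /bmin|]; [rewrite sobjN lerN2 | move: fmin; rewrite lerN2].
Qed.

End GramProgram.

Section BlockGram.
Variables (R : realType) (V : lmodType R) (ip : V -> V -> R).

Definition cat_family m p (u : 'I_m -> V) (v : 'I_p -> V) (a : 'I_(m + p)) : V :=
  match fintype.split a with inl i => u i | inr j => v j end.

Variables (m p : nat) (u : 'I_m -> V) (v : 'I_p -> V).

Lemma cat_family_lshift i : cat_family u v (lshift p i) = u i.
Proof. by rewrite /cat_family (unsplitK (inl i)). Qed.

Lemma cat_family_rshift j : cat_family u v (rshift m j) = v j.
Proof. by rewrite /cat_family (unsplitK (inr j)). Qed.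

Lemma sum_row_mx_cat_family (a : 'rV[R]_m) (b : 'rV[R]_p) :
  \sum_i row_mx a b 0 i *: cat_family u v i =
  \sum_i a 0 i *: u i + \sum_j b 0 j *: v j.
Proof.
rewrite big_split_ord; congr (_ + _); apply: eq_bigr => i _.
  by rewrite row_mxEl cat_family_lshift.
by rewrite row_mxEr cat_family_rshift.
Qed.

Lemma row_mx_ip q (w : 'I_q -> V) (X : 'M[R]_(q, m)) (Y : 'M[R]_(q, p)) :
  (forall l i, X l i = ip (w l) (u i)) -> (forall l j, Y l j = ip (w l) (v j)) ->
  forall l a, row_mx X Y l a = ip (w l) (cat_family u v a).
Proof.
move=> hX hY l a; rewrite -[a]splitK; case: (fintype.split a) => i /=.
  by rewrite row_mxEl cat_family_lshift.
by rewrite row_mxEr cat_family_rshift.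
Qed.

Lemma col_mx_ip q (w : 'I_q -> V) (X : 'M[R]_(m, q)) (Y : 'M[R]_(p, q)) :
  (forall i l, X i l = ip (u i) (w l)) -> (forall j l, Y j l = ip (v j) (w l)) ->
  forall a l, col_mx X Y a l = ip (cat_family u v a) (w l).
Proof.
move=> hX hY a l; rewrite -[a]splitK; case: (fintype.split a) => i /=.
  by rewrite col_mxEu cat_family_lshift.
by rewrite col_mxEd cat_family_rshift.
Qed.

Lemma block_mx_ip (A : 'M[R]_m) (B : 'M[R]_(m, p)) (C : 'M[R]_(p, m)) (D : 'M[R]_p) :
  (forall i i', A i i' = ip (u i) (u i')) -> (forall i j, B i j = ip (u i) (v j)) ->
  (forall j i, C j i = ip (v j) (u i)) -> (forall j j', D j j' = ip (v j) (v j')) ->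
  forall a c, block_mx A B C D a c = ip (cat_family u v a) (cat_family u v c).
Proof.
move=> hA hB hC hD; rewrite block_mxEv; apply: col_mx_ip => [i|j]; exact: row_mx_ip.
Qed.

End BlockGram.

Lemma row_mx_ord2 (R : realType) m (A B : 'cV[R]_m) i (t : 'I_2) :
  (row_mx A B : 'M[R]_(m, 1 + 1)) i t = if val t == 0%N then A i 0 else B i 0.
Proof. by rewrite /row_mx mxE; case: splitP => t'; rewrite (ord1 t') /= => -> //. Qed.

Lemma col_mx_ord2 (R : realType) m (A B : 'rV[R]_m) (t : 'I_2) i :
  (col_mx A B : 'M[R]_(1 + 1, m)) t i = if val t == 0%N then A 0 i else B 0 i.
Proof. by rewrite /col_mx mxE; case: splitP => t'; rewrite (ord1 t') /= => -> //. Qed.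

Section KernelGram.
Variables (R : realType) (n Nk : nat) (kappa : 'rV[R]_n -> 'rV[R]_n -> R).
Hypothesis kappa_sym : forall a b, kappa a b = kappa b a.
Variables (V : lmodType R) (ip : V -> V -> R) (k : 'rV[R]_n -> V).
Hypotheses (ip_inner : inner_product ip) (ip_feature : forall a b, ip (k a) (k b) = kappa a b).
Variables (th : 'I_Nk -> 'rV[R]_n) (theta : 'rV[R]_n) (dk : 'I_n -> V).
Hypothesis dk_rep : forall j g, derive (ev ip k g) theta (evec j) = ip g (dk j).

Lemma d1_rep j t : d1 kappa j theta t = ip (dk j) (k t).
Proof.
rewrite /d1; have -> : (fun x => kappa x t) = ev ip k (k t).
  by apply: funext => x; rewrite /ev ip_feature kappa_sym.
by rewrite dk_rep (ipC ip_inner).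
Qed.

Lemma d12_rep i j : d12 kappa i j theta theta = ip (dk i) (dk j).
Proof.
rewrite /d12; have -> : (fun z => derive (fun x => kappa x z) theta (evec i)) = ev ip k (dk i).
  by apply: funext => z; exact: d1_rep.
exact: dk_rep.
Qed.

Lemma grad_ev_mulmx (gm : 'rV[R]_n) g :
  (grad (ev ip k g) theta *m gm^T) 0 0 = ip g (\sum_j gm 0 j *: dk j).
Proof.
rewrite mxE (ip_sumr ip_inner); apply: eq_bigr => j _.
by rewrite !mxE dk_rep (ipZr ip_inner) mulrC.
Qed.

Local Notation kth := (fun i => k (th i)).

Lemma frakK_gram a c :
  frakK kappa th theta a c = ip (cat_family kth dk a) (cat_family kth dk c).
Proof.
apply: block_mx_ip => [i i'|i j|j i|j j']; rewrite !mxE ?d1_rep ?d12_rep ?ip_feature //.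
exact: ipC.
Qed.

Lemma frakK'_gram thetap a c :
  let kpt (t : 'I_2) := k (if val t == 0%N then theta else thetap) in
  frakK' kappa th theta thetap a c =
  ip (cat_family (cat_family kth kpt) dk a) (cat_family (cat_family kth kpt) dk c).
Proof.
move=> kpt; have kpt_row j (l : 'I_2) :
    row_mx (gradK kappa theta theta) (gradK kappa theta thetap) j l = ip (dk j) (kpt l).
  by rewrite row_mx_ord2 /kpt; case: ifP => _; rewrite mxE d1_rep.
apply: block_mx_ip => [a' c'|a' j|j a'|j j'].
- apply: block_mx_ip => [i i'|i l|l i|l l'].
  + by rewrite mxE ip_feature.
  + by rewrite row_mx_ord2 /kpt; case: ifP => _; rewrite !mxE ip_feature kappa_sym.
  + by rewrite col_mx_ord2 /kpt; case: ifP => _; rewrite !mxE ip_feature.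
  + by rewrite mxE ip_feature.
- rewrite mxE (ipC ip_inner); apply: (row_mx_ip (w := dk)) => [i l|]; last exact: kpt_row.
  by rewrite mxE d1_rep.
- apply: (row_mx_ip (w := dk)) => [i l|]; last exact: kpt_row.
  by rewrite mxE d1_rep.
- by rewrite mxE d12_rep.
Qed.

End KernelGram.

Theorem theorem1 (R : realType) (n Nk : nat)
  (kappa : 'rV[R]_n -> 'rV[R]_n -> R)
  (V : lmodType R) (ip : V -> V -> R) (k : 'rV[R]_n -> V)
  (th : 'I_Nk -> 'rV[R]_n) (y : 'I_Nk -> R) (delta Gamma : R) (f mk : V)
  (theta : 'rV[R]_n) :
  is_kernel kappa ->
  is_RKHS kappa ip k ->
  0 <= delta -> 0 < Gamma ->
  ipnorm ip f <= Gamma ->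
  interp_ok ip k th y delta f ->
  is_min_norm_interp ip k th y delta mk ->
  let gm : 'rV[R]_n := grad (ev ip k mk) theta in
  (let obj (g : V) : R := (grad (ev ip k g) theta *m gm^T) 0 0 in
   let K : 'M[R]_(Nk + n) := frakK kappa th theta in
   let cvec : 'rV[R]_(Nk + n) := row_mx (0 : 'rV[R]_Nk) gm in
   let sobj (b : 'cV[R]_(Nk + n)) : R := (cvec *m K *m b) 0 0 in
   let sfeas (b : 'cV[R]_(Nk + n)) : Prop :=
     (b^T *m K *m b) 0 0 <= Gamma ^+ 2 /\
     (forall i : 'I_Nk,
        `|((delta_mx (lshift n i) 0 : 'cV[R]_(Nk + n))^T *m K *m b) 0 0 - y i| <= delta) in
   exists g0 : V,
     feasible ip k th y delta Gamma g0 /\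
     (forall g, feasible ip k th y delta Gamma g -> obj g0 <= obj g) /\
     (exists b, sfeas b /\ sobj b = obj g0) /\
     (forall b, sfeas b -> obj g0 <= sobj b) /\
     obj g0 <= obj f) /\
  (forall mu c : R, 0 < mu -> 0 < c < 1 ->
   let thetap : 'rV[R]_n := theta - mu *: gm in
   let obj (g : V) : R :=
     ev ip k g thetap - ev ip k g theta
     + c * mu * (grad (ev ip k g) theta *m gm^T) 0 0 in
   let K : 'M[R]_(Nk + 2 + n) := frakK' kappa th theta thetap in
   let cvec : 'rV[R]_(Nk + 2 + n) :=
     row_mx (row_mx (0 : 'rV[R]_Nk) (\row_(j < 2) if val j == 0%N then -1 else 1))
            ((c * mu) *: gm) in
   let sobj (b : 'cV[R]_(Nk + 2 + n)) : R := (cvec *m K *m b) 0 0 in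
   let sfeas (b : 'cV[R]_(Nk + 2 + n)) : Prop :=
     (b^T *m K *m b) 0 0 <= Gamma ^+ 2 /\
     (forall i : 'I_Nk,
        `|((delta_mx (lshift n (lshift 2 i)) 0 : 'cV[R]_(Nk + 2 + n))^T *m K *m b) 0 0
          - y i| <= delta) in
   exists g0 : V,
     feasible ip k th y delta Gamma g0 /\
     (forall g, feasible ip k th y delta Gamma g -> obj g <= obj g0) /\
     (exists b, sfeas b /\ sobj b = obj g0) /\
     (forall b, sfeas b -> sobj b <= obj g0) /\
     obj f <= obj g0).
Proof.
move=> [kappa_C2 [kappa_sym _]] [ip_inner [ip_compl [ip_feature _]]] _ G0 fG f_ok _ gm.
have /choice [dk hdk] := derive_ev_rep kappa_C2 ip_inner ip_feature ip_compl theta.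
have dk_rep j g : derive (ev ip k g) theta (evec j) = ip g (dk j) by case: (hdk j g).
have f_feas : feasible ip k th y delta Gamma f.
  by split=> //; rewrite -ipnorm_le // ltW.
pose w := \sum_j gm 0 j *: dk j.
split=> [obj K cvec sobj sfeas | mu c _ _ thetap obj K cvec sobj sfeas].
  apply: (gram_program_min ip_inner (frakK_gram kappa_sym ip_inner ip_feature th dk_rep)
    (cat_family_lshift _ _) (grad_ev_mulmx ip_inner dk_rep gm) _ f_feas).
  by rewrite sum_row_mx_cat_family big1 ?add0r // => i _; rewrite mxE scale0r.
apply: (gram_program_max ip_inner (frakK'_gram kappa_sym ip_inner ip_feature th dk_rep thetap)
  (fun i => etrans (cat_family_lshift _ _ _) (cat_family_lshift _ _ _))
  (w := k thetap - k theta + (c * mu) *: w) _ _ f_feas).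
- move=> g; rewrite /obj (grad_ev_mulmx ip_inner dk_rep) /ev.
  by rewrite (ipDr ip_inner) (ipBr ip_inner) (ipZr ip_inner).
- rewrite !sum_row_mx_cat_family big1 ?add0r => [|i _]; last by rewrite mxE scale0r.
  rewrite !big_ord_recl big_ord0 addr0 /w scaler_sumr; congr (_ + _).
    by rewrite !mxE /= scaleN1r scale1r addrC.
  by apply: eq_bigr => j _; rewrite mxE scalerA.
Qed.
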